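(* Let $A$ be the graph on $9$ vertices consisting of a central triangle with vertices $p_0,p_1,p_2$ together with three further triangles $\Delta_0,\Delta_1,\Delta_2$, where $\Delta_i$ shares exactly the vertex $p_i$ with the central triangle and the triangles $\Delta_0,\Delta_1,\Delta_2$ are pairwise vertex-disjoint. Let $G=A\,\square\,A$ be the cartesian product of $A$ with itself (the ''2-hive''). Then there exists a set $S\subseteq V(G)$ that is a non-isolated perfect dominating set of $G$, i.e. every vertex of $G$ not in $S$ either has exactly one neighbour in $S$, or has exactly two neighbours in $S$ and these two neighbours are the end-vertices of an edge of $G$. Moreover, the connected components of the subgraph of $G$ induced by $S$ are: four copies of $K_2$ (single edges), one $4$-cycle $K_2\square K_2$, and one triangular prism $K_3\square K_2$.
   Context: A tersquare is the graph $K_3\square K_3$ (cartesian product of two triangles, vertex set $F_3\times F_3$ with $F_3=\{0,1,2\}$); its triangles are the six subgraphs obtained by fixing one coordinate. The paper's ''2-hive'' $[[\emptyset]]$ is the union of $16$ tersquares: a central tersquare, six ''subcentral'' tersquares each glued to the central one along exactly one of its six triangles, and nine ''corner'' tersquares, each sharing one triangle with a subcentral tersquare glued along an $x$-triangle, one triangle with a subcentral tersquare glued along a $y$-triangle, and exactly one vertex with the central tersquare. As a graph this union is exactly $A\square A$ as described in the claim (the $16$ tersquares being the products $T\times T'$ with $T,T'$ among the four triangles of $A$). Here $K_2$ is a single edge, and $\square$ denotes the cartesian product of graphs. *)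

From mathcomp Require Import all_boot.
Set Implicit Arguments. Unset Strict Implicit. Unset Printing Implicit Defensive.

(* Simple graphs: symmetric irreflexive boolean relations on a finType. *)

Definition Kn (n : nat) : rel 'I_n := fun x y => x != y.
Arguments Kn n : clear implicits.

Definition cartprod (T U : finType) (e : rel T) (f : rel U) : rel (T * U) :=
  fun x y => ((x.1 == y.1) && f x.2 y.2) || ((x.2 == y.2) && e x.1 y.1).

(* The graph A on vertices 0..8: central triangle {0,1,2} (p_i = i),
   and triangles Delta_0 = {0,3,4}, Delta_1 = {1,5,6}, Delta_2 = {2,7,8}. *)
Definition inT (t : seq nat) (a b : nat) : bool := (a \in t) && (b \in t).

Definition adjA : rel 'I_9 := fun x y =>
  (x != y) &&
  [|| inT [:: 0; 1; 2] x y, inT [:: 0; 3; 4] x y,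
      inT [:: 1; 5; 6] x y | inT [:: 2; 7; 8] x y].

Definition hiveV := ('I_9 * 'I_9)%type.
Definition adjG : rel hiveV := cartprod adjA adjA.

Definition nbhd (T : finType) (e : rel T) (v : T) : {set T} := [set u | e v u].

Definition nipds (T : finType) (e : rel T) (S : {set T}) : Prop :=
  forall v, v \notin S ->
    let NS := nbhd e v :&: S in
    (#|NS| == 1) ||
    ((#|NS| == 2) && [forall x in NS, forall y in NS, (x != y) ==> e x y]).

Definition induced (T : finType) (e : rel T) (S : {set T}) : rel T :=
  fun x y => [&& x \in S, y \in S & e x y].

Definition components (T : finType) (e : rel T) (S : {set T}) : {set {set T}} :=
  [set [set y in S | connect (induced e S) x y] | x in S].

Definition iso_induced (H : finType) (eH : rel H) (T : finType) (e : rel T)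
  (C : {set T}) : bool :=
  [exists f : {ffun H -> T},
    [&& injectiveb f, [set f u | u : H] == C &
        [forall u, forall v, eH u v == e (f u) (f v)]]].

From mathcomp Require Import all_boot.

Set Implicit Arguments. Unset Strict Implicit. Unset Printing Implicit Defensive.

(* The set S is the union of six blocks X × Y of vertices of A □ A whose sides
   X and Y are cliques of A: {1} × {7,8}, {2} × {3,4}, {2} × {5,6}, {7,8} × {2},
   {5,6} × {0,1} and {3,4} × {0,1,2}.  A product of cliques is connected, and two
   distinct blocks neither meet nor are joined by an edge, so the blocks are
   exactly the components of S; a block with sides of sizes p and q induces
   K_p □ K_q, giving four K_2, one 4-cycle and one prism.  The separation of the
   blocks and the domination condition at the 63 vertices outside S are finite
   checks, decided by evaluation once the quantifiers over finite types are
   replaced by explicit enumerations. *)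

Definition clique (T : finType) (e : rel T) (X : {pred T}) : Prop :=
  {in X &, forall x y, x != y -> e x y}.

Lemma connect_induced_setX (T U : finType) (e : rel T) (f : rel U)
    (X : {set T}) (Y : {set U}) :
  clique e X -> clique f Y ->
  {in setX X Y &, forall x y, connect (induced (cartprod e f) (setX X Y)) x y}.
Proof.
move=> cliqueX cliqueY [a b] [a' b'].
rewrite !in_setX => /andP[Xa Yb] /andP[Xa' Yb'].
apply: (@connect_trans _ _ (a, b')).
- case: (eqVneq b b') => [-> | nbb']; first exact: connect0.
  apply: connect1; rewrite /induced !in_setX Xa Yb Yb' /cartprod /=.
  by rewrite eqxx (cliqueY _ _ Yb Yb' nbb').
- case: (eqVneq a a') => [-> | naa']; first exact: connect0.
  apply: connect1; rewrite /induced !in_setX Xa Xa' Yb' /cartprod /=.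
  by rewrite eqxx (cliqueX _ _ Xa Xa' naa') orbT.
Qed.

Section ComponentsOfPartition.

Variables (T I : finType) (e : rel T) (B : I -> {set T}).
Hypothesis B_connected :
  forall i, {in B i &, forall x y, connect (induced e (B i)) x y}.
Hypothesis B_separated :
  forall i j x y, x \in B i -> y \in B j -> (x == y) || e x y -> i = j.
Hypothesis B_nonempty : forall i, B i != set0.

Let S := \bigcup_i B i.

Lemma component_bigcup i x :
  x \in B i -> [set y in S | connect (induced e S) x y] = B i.
Proof.
move=> Bx; have BS : B i \subset S by exact: bigcup_sup.
apply/setP => y; rewrite inE; apply/andP/idP => [[_ cxy] | By].
  have closedB : closed (induced e S) (B i).
    move=> u w /and3P[/bigcupP[j _ Bu] /bigcupP[k _ Bw] euw].
    have jk : j = k by apply: B_separated Bu Bw _; rewrite euw orbT.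
    rewrite -{k}jk in Bw.
    have same_block z l : z \in B l -> z \in B j -> l = j.
      by move=> Bzl Bzj; apply: B_separated Bzl Bzj _; rewrite eqxx.
    by apply/idP/idP => [/same_block-> | /same_block->].
  by rewrite -(closed_connect closedB cxy).
split; first exact: (subsetP BS).
apply: connect_sub (B_connected Bx By) => u w /and3P[Bu Bw euw].
by apply: connect1; rewrite /induced euw !(subsetP BS).
Qed.

Lemma components_bigcup : components e S = [set B i | i : I].
Proof.
apply/setP => C; apply/imsetP/imsetP => [[x /bigcupP[i _ Bx] ->] | [i _ ->]].
  by exists i; rewrite ?(component_bigcup Bx).
have /set0Pn[x Bx] := B_nonempty i.
by exists x; rewrite ?(component_bigcup Bx) //; apply/bigcupP; exists i.
Qed.

Lemma partition_inj : injective B.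
Proof.
move=> i j Bij; have /set0Pn[x Bx] := B_nonempty i.
by apply: (B_separated (y := x) Bx); rewrite -?Bij ?eqxx.
Qed.

End ComponentsOfPartition.

Lemma card_iso_induced (H T : finType) (eH : rel H) (e : rel T) (C : {set T}) :
  iso_induced eH e C -> #|C| = #|H|.
Proof. by case/existsP => f /and3P[/injectiveP f_inj /eqP <- _]; rewrite card_imset. Qed.

Lemma embedding_iso_induced (H T : finType) (eH : rel H) (e : rel T)
    (C : {set T}) (f : H -> T) :
  injective f -> (forall u v, eH u v = e (f u) (f v)) -> (forall u, f u \in C) ->
  #|C| <= #|H| -> iso_induced eH e C.
Proof.
move=> f_inj f_edge f_C card_C; apply/existsP; exists [ffun u => f u].
have ff_inj : injective [ffun u => f u] by move=> u v; rewrite !ffunE => /f_inj.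
apply/and3P; split; first exact/injectiveP.
  rewrite eqEcard card_imset // card_C andbT.
  by apply/subsetP => _ /imsetP[u _ ->]; rewrite ffunE.
by apply/forallP => u; apply/forallP => v; rewrite !ffunE f_edge.
Qed.

Lemma card_sep_imset (I T : finType) (B : I -> T) (P : pred T) (q : pred I) :
  injective B -> (forall i, P (B i) = q i) ->
  #|[set C in [set B i | i : I] | P C]| = #|q|.
Proof.
move=> B_inj Pq; rewrite -[RHS](card_imset q B_inj); apply: eq_card => C.
rewrite inE; apply/andP/imsetP => [[/imsetP[i _ ->]] | [i qi ->]].
  by rewrite Pq => qi; exists i.
by rewrite imset_f ?Pq.
Qed.

Section Enumeration.

Variables (T : finType) (s : seq T).
Hypothesis s_full : forall x, x \in s.

Lemma all_enumP (P : pred T) : reflect (forall x, P x) (all P s).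
Proof. by apply: (iffP allP) => [P_s x | P_T x _]; [apply: P_s | apply: P_T]. Qed.

Lemma has_enumP (P : pred T) : reflect (exists x, P x) (has P s).
Proof. by apply: (iffP hasP) => [[x _ Px] | [x Px]]; exists x. Qed.

Lemma iso_induced_enum (U : finType) (eH : rel T) (e : rel U) (C : {set U})
    (p : pred U) (f : T -> U) :
  (forall x, (x \in C) = p x) -> #|C| <= #|T| ->
  all (fun u => p (f u) && all (fun v =>
    ((f u == f v) ==> (u == v)) && (eH u v == e (f u) (f v))) s) s ->
  iso_induced eH e C.
Proof.
move=> Cp card_C /all_enumP f_ok; apply: (embedding_iso_induced (f := f)) card_C.
- move=> u v /eqP fuv; have /andP[_ /all_enumP/(_ v)/andP[]] := f_ok u.
  by rewrite fuv => /eqP.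
- by move=> u v; have /andP[_ /all_enumP/(_ v)/andP[_ /eqP]] := f_ok u.
- by move=> u; rewrite Cp; case/andP: (f_ok u).
Qed.

Hypothesis s_uniq : uniq s.

Lemma card_enum (A : {pred T}) (p : pred T) : A =i p -> #|A| = count p s.
Proof.
move=> Ap; rewrite -size_filter; move/card_uniqP: (filter_uniq p s_uniq) => <-.
by apply: eq_card => x; rewrite mem_filter s_full andbT Ap.
Qed.

Definition perfect_at (e : rel T) (p : pred T) (v : T) : bool :=
  let N := [seq u <- s | e v u && p u] in
  (size N == 1) ||
  (size N == 2) && all (fun x => all (fun y => (x != y) ==> e x y) N) N.

Lemma nipds_enum (e : rel T) (S : {set T}) (p : pred T) :
  (forall x, (x \in S) = p x) -> all (fun v => p v || perfect_at e p v) s ->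
  nipds e S.
Proof.
move=> Sp /all_enumP perfect v; rewrite Sp => /negbTE pv.
have NSp : nbhd e v :&: S =i [pred u | e v u && p u] by move=> u; rewrite !inE Sp.
have memN u : (u \in [seq u <- s | e v u && p u]) = (u \in nbhd e v :&: S).
  by rewrite mem_filter s_full andbT NSp.
move: (perfect v); rewrite pv /perfect_at /= (card_enum NSp) -size_filter.
case/orP => [-> // | /andP[-> adjN]]; apply/orP; right.
apply/forallP => x; apply/implyP; rewrite -memN => Nx.
by apply/forallP => y; apply/implyP; rewrite -memN => Ny; apply: (allP (allP adjN x Nx)).
Qed.

End Enumeration.

(* [ord_enum] is built with the opaque [insub], on which [vm_compute] gets stuck;
   [insub_eq] is its transparent twin. *)
Definition ord_seq n : seq 'I_n := pmap (@insub_eq _ _ _) (iota 0 n).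

Lemma ord_seqE n : ord_seq n = ord_enum n.
Proof. by apply: eq_pmap => m; rewrite insub_eqE. Qed.

Lemma mem_ord_seq n (i : 'I_n) : i \in ord_seq n.
Proof. by rewrite ord_seqE mem_ord_enum. Qed.

Lemma ord_seq_uniq n : uniq (ord_seq n).
Proof. by rewrite ord_seqE ord_enum_uniq. Qed.

Definition pair_seq (T U : Type) (s : seq T) (t : seq U) : seq (T * U) :=
  [seq (x, y) | x <- s, y <- t].

Lemma mem_pair_seq (T U : finType) (s : seq T) (t : seq U) :
  (forall x, x \in s) -> (forall y, y \in t) -> forall z, z \in pair_seq s t.
Proof. by move=> s_full t_full [x y]; apply: allpairs_f. Qed.

Lemma pair_seq_uniq (T U : finType) (s : seq T) (t : seq U) :
  uniq s -> uniq t -> uniq (pair_seq s t).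
Proof. by move=> s_uniq t_uniq; apply: allpairs_uniq => // [[? ?] [? ?]]. Qed.

Definition hive_seq : seq hiveV := pair_seq (ord_seq 9) (ord_seq 9).

Lemma mem_hive_seq v : v \in hive_seq.
Proof. exact: mem_pair_seq (@mem_ord_seq 9) (@mem_ord_seq 9) v. Qed.

Lemma hive_seq_uniq : uniq hive_seq.
Proof. exact: pair_seq_uniq (ord_seq_uniq 9) (ord_seq_uniq 9). Qed.

Definition hive_blocks : seq (seq nat * seq nat) :=
  [:: ([:: 1], [:: 7; 8]); ([:: 2], [:: 3; 4]); ([:: 2], [:: 5; 6]);
      ([:: 7; 8], [:: 2]); ([:: 5; 6], [:: 0; 1]); ([:: 3; 4], [:: 0; 1; 2])].

Definition block_coords (i : 'I_6) : seq nat * seq nat :=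
  nth ([::], [::]) hive_blocks i.

Definition side (X : seq nat) : {set 'I_9} := [set a | val a \in X].

Definition block (i : 'I_6) : {set hiveV} :=
  setX (side (block_coords i).1) (side (block_coords i).2).

Definition in_block (i : 'I_6) (v : hiveV) : bool :=
  (val v.1 \in (block_coords i).1) && (val v.2 \in (block_coords i).2).

Lemma blockE i v : (v \in block i) = in_block i v.
Proof. by case: v => a b; rewrite in_setX !inE. Qed.

Ltac case_block i := case: i => [[|[|[|[|[|[|//]]]]]] ?].

Definition hive_S : {set hiveV} := \bigcup_i block i.

Lemma hive_SE v : (v \in hive_S) = has (in_block^~ v) (ord_seq 6).
Proof.
apply/bigcupP/(has_enumP (@mem_ord_seq 6)) => [[i _ Bv] | [i Bv]].
  by exists i; rewrite -blockE.
by exists i; rewrite ?blockE.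
Qed.

Lemma clique_side (X : seq nat) :
  all (fun a => all (fun b => [&& val a \in X, val b \in X & a != b] ==> adjA a b)
         (ord_seq 9)) (ord_seq 9) ->
  clique adjA (side X).
Proof.
move=> /(all_enumP (@mem_ord_seq 9)) cliqueX a b; rewrite !inE => Xa Xb nab.
by have /(all_enumP (@mem_ord_seq 9))/(_ b) := cliqueX a; rewrite Xa Xb nab.
Qed.

Lemma block_connected i :
  {in block i &, forall x y, connect (induced adjG (block i)) x y}.
Proof.
by apply: connect_induced_setX; apply: clique_side; case_block i; vm_compute.
Qed.

Definition block_seq (i : 'I_6) : seq hiveV := [seq v <- hive_seq | in_block i v].

Lemma mem_block_seq i v : (v \in block_seq i) = (v \in block i).
Proof. by rewrite mem_filter mem_hive_seq andbT blockE. Qed.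

Lemma block_separated i j x y :
  x \in block i -> y \in block j -> (x == y) || adjG x y -> i = j.
Proof.
have separated : all (fun i => all (fun j => (i == j) || all (fun x => all (fun y =>
    ~~ ((x == y) || adjG x y)) (block_seq j)) (block_seq i)) (ord_seq 6)) (ord_seq 6).
  by vm_compute.
rewrite -!mem_block_seq => Bx By exy; apply/eqP.
move/(all_enumP (@mem_ord_seq 6))/(_ i)/(all_enumP (@mem_ord_seq 6))/(_ j): separated.
by case/orP => // /allP/(_ x Bx)/allP/(_ y By); rewrite exy.
Qed.

Lemma card_block i : #|block i| = nth 0 [:: 2; 2; 2; 2; 4; 6] i.
Proof.
rewrite (card_enum mem_hive_seq hive_seq_uniq (blockE i)).
by case_block i; vm_compute.
Qed.

Lemma block_nonempty i : block i != set0.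
Proof. by rewrite -card_gt0 card_block; case_block i. Qed.

Lemma components_hive_S : components adjG hive_S = [set block i | i : 'I_6].
Proof.
exact: components_bigcup block_connected block_separated block_nonempty.
Qed.

Lemma block_inj : injective block.
Proof. exact: partition_inj block_separated block_nonempty. Qed.

Lemma nipds_hive_S : nipds adjG hive_S.
Proof. by apply: (nipds_enum mem_hive_seq hive_seq_uniq hive_SE); vm_compute. Qed.

Definition hive_vertex (a b : nat) : hiveV :=
  (nth ord0 (ord_seq 9) a, nth ord0 (ord_seq 9) b).

Lemma iso_block_K2 i : iso_induced (Kn 2) adjG (block i) = (i < 4).
Proof.
apply/idP/idP => [/card_iso_induced | lt_i4].
  by rewrite card_block card_ord; case_block i.
apply: (iso_induced_enum (@mem_ord_seq 2) (blockE i) _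
  (f := fun u => nth (ord0, ord0) (block_seq i) u)).
  by move: lt_i4; rewrite card_block card_ord; case_block i.
by move: lt_i4; case_block i; vm_compute.
Qed.

Lemma iso_block_C4 i :
  iso_induced (cartprod (Kn 2) (Kn 2)) adjG (block i) = (i == 4 :> nat).
Proof.
apply/idP/idP => [/card_iso_induced | /eqP i4].
  by rewrite card_block card_prod !card_ord; case_block i.
apply: (iso_induced_enum (mem_pair_seq (@mem_ord_seq 2) (@mem_ord_seq 2))
  (blockE i) _ (f := fun u => hive_vertex (5 + u.1) u.2)).
  by rewrite card_block card_prod !card_ord i4.
by move: i4; case_block i; vm_compute.
Qed.

Lemma iso_block_prism i :
  iso_induced (cartprod (Kn 3) (Kn 2)) adjG (block i) = (i == 5 :> nat).
Proof.
apply/idP/idP => [/card_iso_induced | /eqP i5].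
  by rewrite card_block card_prod !card_ord; case_block i.
apply: (iso_induced_enum (mem_pair_seq (@mem_ord_seq 3) (@mem_ord_seq 2))
  (blockE i) _ (f := fun u => hive_vertex (3 + u.2) u.1)).
  by rewrite card_block card_prod !card_ord i5.
by move: i5; case_block i; vm_compute.
Qed.

Theorem theorem4p1 :
  exists S : {set hiveV},
    nipds adjG S /\
    (forall C, C \in components adjG S ->
       [|| iso_induced (Kn 2) adjG C,
           iso_induced (cartprod (Kn 2) (Kn 2)) adjG C
         | iso_induced (cartprod (Kn 3) (Kn 2)) adjG C]) /\
    #|[set C in components adjG S | iso_induced (Kn 2) adjG C]| = 4 /\
    #|[set C in components adjG S |
         iso_induced (cartprod (Kn 2) (Kn 2)) adjG C]| = 1 /\
    #|[set C in components adjG S |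
         iso_induced (cartprod (Kn 3) (Kn 2)) adjG C]| = 1.
Proof.
exists hive_S; rewrite components_hive_S; split; first exact: nipds_hive_S.
split.
  move=> _ /imsetP[i _ ->].
  by rewrite iso_block_K2 iso_block_C4 iso_block_prism; case_block i.
have card_index (q : pred 'I_6) : #|q| = count q (ord_seq 6).
  exact: card_enum (@mem_ord_seq 6) (ord_seq_uniq 6) _ _ (fun _ => erefl).
rewrite (card_sep_imset block_inj iso_block_K2) (card_sep_imset block_inj iso_block_C4).
rewrite (card_sep_imset block_inj iso_block_prism) !card_index.
by vm_compute.
Qed.
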